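(* Let $T$ be a finite tree with vertex set $\{u_1,\dots,u_n\}$, and let \[\cdots\to R^c(-4)\oplus R^b(-3)\to R^q(-2)\to R\to R/I(L(T))\to 0\] be the minimal graded free resolution of $R/I(L(T))$ (so $b=\beta_{2,3}(R/I(L(T)))$). Then \[b=\sum_{\{u_i,u_j\}\in E(T)}\binom{\deg u_i+\deg u_j-2}{2}-\sum_{i=1}^n\binom{\deg u_i}{3}.\]
   Context: Degrees are taken in $T$. The line graph $L(T)$ has vertex set $E(T)$, two vertices adjacent iff the corresponding edges share a vertex. $R=\Bbbk[e_{uv}:\{u,v\}\in E(T)]$ for a field $\Bbbk$, and $I(L(T))=\langle e_fe_g: f\neq g\in E(T),\ f\cap g\neq\emptyset\rangle$ is the edge ideal of $L(T)$. *)

From HB Require Import structures.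
From mathcomp Require Import all_boot all_algebra.
From mathcomp Require Import mpoly.

Set Implicit Arguments.
Unset Strict Implicit.
Unset Printing Implicit Defensive.

Import GRing.Theory.
Local Open Scope ring_scope.

Section Graph.
Variables (V : finType) (e : rel V).

Definition simple_graph : Prop := ssrbool.symmetric e /\ irreflexive e.

Definition graph_edges : {set {set V}} :=
  [set s : {set V} | [exists x, exists y, e x y && (s == [set x; y])]].

Definition graph_connected : Prop := forall x y : V, connect e x y.

Definition graph_acyclic : Prop :=
  forall p : seq V, uniq p -> (3 <= size p)%N -> ~~ cycle e p.

Definition is_tree : Prop :=
  simple_graph /\ (0 < #|V|)%N /\ graph_connected /\ graph_acyclic.

Definition vdeg (x : V) : nat := #|[set y | e x y]|.

(* number of edges; the variables of R are indexed by 'I_nedges *)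
Definition nedges : nat := #|graph_edges|.

Definition edge_of (i : 'I_nedges) : {set V} := @enum_val _ (mem graph_edges) i.

Definition line_adj (i j : 'I_nedges) : bool :=
  (i != j) && (edge_of i :&: edge_of j != set0).

(* the minimal monomial generators e_f e_g of I(L(T)), each unordered pair once *)
Definition line_gens : {set 'I_nedges * 'I_nedges} :=
  [set p : 'I_nedges * 'I_nedges | ((p.1 < p.2)%N && line_adj p.1 p.2)].

Definition ngens : nat := #|line_gens|.

Section Ring.
Variable K : fieldType.

Definition gen_mon (k : 'I_ngens) : {mpoly K[nedges]} :=
  let p := @enum_val _ (mem line_gens) k in 'X_p.1 * 'X_p.2.

(* F_1 = R(-2)^q --> R ; an element of (F_1)_3 is a q-tuple of linear forms,
   encoded by its coefficient matrix c (row k = linear form of generator k) *)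
Definition syz_image (c : 'M[K]_(ngens, nedges)) : {mpoly K[nedges]} :=
  \sum_(k < ngens) ((\sum_(f < nedges) c k f *: 'X_f) * gen_mon k).

(* coefficients of the image on all monomials of total degree < 4 (the image
   is homogeneous of degree 3, so it vanishes iff these all vanish) *)
Definition syz_coords (c : 'M[K]_(ngens, nedges)) : 'rV[K]_(#|{: 'X_{1..nedges < 4}}|) :=
  \row_(j < #|{: 'X_{1..nedges < 4}}|)
     (syz_image c)@_(bmnm (@enum_val _ (mem {: 'X_{1..nedges < 4}}) j)).

Definition syz3 : {vspace 'M[K]_(ngens, nedges)} := lker (linfun syz_coords).

(* beta_{2,3}(R/I(L(T))) = dim_K (ker(F_1 -> R))_3 *)
Definition beta23_line : nat := \dim syz3.

End Ring.
End Graph.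

(** The graded Betti number [beta_{2,3}] of the edge ideal of any graph [G] on
  [m] vertices with [q] edges is the dimension of the kernel of the map sending
  a [q]-tuple of linear forms [(l_k)] to [sum_k l_k g_k], [g_k] the edge
  monomials. This map sends each basis vector [(k, f)] to the monomial
  [x_f g_k], so the kernel has dimension [q m] minus the number of distinct
  cubic monomials [x_f g_k]. The non-squarefree ones [x_f^2 x_g] are in
  bijection with the pairs [(k, f)] where [f] is an end of [g_k]; a squarefree
  one is a 3-set [S] spanning an edge, hit by exactly [edges(S)] pairs. The
  identity [edges(S) + [S is a triangle] = centers(S) + [edges(S) > 0]] for
  every 3-set then gives [beta_{2,3} = sum_v C(deg v, 2) - #triangles(G)].
  For [G = L(T)], an edge [uv] of [T] has degree [deg u + deg v - 2] in [L(T)],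
  and since [T] has no triangle, the triangles of [L(T)] are the triples of
  edges through a common vertex of [T]: there are [sum_u C(deg u, 3)]. *)

From HB Require Import structures.
From mathcomp Require Import all_boot all_algebra.
From mathcomp Require Import mpoly.
From mathcomp Require Import zify.

Set Implicit Arguments.
Unset Strict Implicit.
Unset Printing Implicit Defensive.

Lemma card_set_sum (T : finType) (P : pred T) : #|[set x | P x]| = \sum_x P x.
Proof. by rewrite -sum1dep_card big_mkcond; apply: eq_bigr => x _; case: (P x). Qed.

Lemma card_set_in_sum (T : finType) (A : {pred T}) (P : pred T) :
  #|[set x in A | P x]| = \sum_(x in A) P x.
Proof. by rewrite card_set_sum [RHS]big_mkcond; apply: eq_bigr => x _; case: (x \in A). Qed.

Lemma big_set_seq (T : finType) (s : seq T) (F : T -> nat) : uniq s ->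
  \sum_(x in [set u | u \in s]) F x = \sum_(x <- s) F x.
Proof. by move=> s_uniq; rewrite big_uniq //; apply: eq_bigl => x; rewrite inE. Qed.

Lemma card_imset_eq_kernel (T Y Z : finType) (D : {set T}) (f : T -> Y) (g : T -> Z) :
  {in D &, forall x y, (f x == f y) = (g x == g y)} -> #|f @: D| = #|g @: D|.
Proof.
move=> fg; pose h y := if [pick x in D | f x == y] is Some x then Some (g x) else None.
have hf : {in D, forall x, h (f x) = Some (g x)}.
  move=> x xD; rewrite /h; case: pickP => [x' /andP[x'D /eqP fx'] | /(_ x)].
    by congr Some; apply/eqP; rewrite -fg // fx'.
  by rewrite xD eqxx.
rewrite -(card_imset (g @: D) (@Some_inj _)).
have -> : Some @: (g @: D) = h @: (f @: D).
  apply/setP => z; apply/imsetP/imsetP => [[_ /imsetP[x xD ->] ->]|[_ /imsetP[x xD ->] ->]].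
    by exists (f x); [apply: imset_f | rewrite hf].
  by exists (g x); [apply: imset_f | rewrite hf].
rewrite [RHS]card_in_imset // => _ _ /imsetP[x xD ->] /imsetP[y yD ->].
by rewrite !hf // => -[] /eqP; rewrite -fg // => /eqP.
Qed.

Lemma setI2_neq0 (T : finType) (A : {set T}) x y :
  (A :&: [set x; y] != set0) = (x \in A) || (y \in A).
Proof.
apply/set0Pn/orP => [[z]|[xA|yA]].
- by rewrite !inE => /andP[zA /orP[]/eqP zeq]; [left|right]; rewrite -zeq.
- by exists x; rewrite !inE xA eqxx.
- by exists y; rewrite !inE yA eqxx orbT.
Qed.

Section UnitMatrixMaps.
Import GRing.Theory.
Local Open Scope ring_scope.

Lemma dim_span_delta (K : fieldType) N (A : {set 'I_N}) :
  \dim <<[seq delta_mx 0 j | j <- enum A] : seq 'rV[K]_N>> = #|A|.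
Proof.
pose span_of (B : {set 'I_N}) : {vspace 'rV[K]_N} :=
  <<[seq delta_mx 0%R j | j <- enum B]>>%VS.
have dim_le B : (\dim (span_of B) <= #|B|)%N.
  by rewrite (leq_trans (dim_span _)) // size_map cardE.
have full : (fullv <= span_of A + span_of (~: A))%VS.
  apply/subvP => v _; rewrite (row_sum_delta v) (bigID (mem A)) /=.
  apply: memv_add; apply: memv_suml => j Aj; apply: memvZ; apply: memv_span.
    by apply: map_f; rewrite mem_enum.
  by apply: map_f; rewrite mem_enum inE.
have [le_dim_add _] := dimv_add_leqif (span_of A) (span_of (~: A)).
have := leq_trans (dimvS full) le_dim_add; rewrite dimvf dim_matrix mul1r => le_full.
apply/eqP; rewrite eqn_leq dim_le -(leq_add2r #|~: A|) cardsC card_ord.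
by rewrite (leq_trans le_full) // leq_add2l dim_le.
Qed.

Lemma dim_lker_unit_map (K : fieldType) q m N (g : 'I_q * 'I_m -> 'I_N)
    (L : {linear 'M[K]_(q, m) -> 'rV[K]_N}) :
  (forall k f, L (delta_mx k f) = delta_mx 0 (g (k, f))) ->
  (\dim (lker (linfun L)) + #|g @: setT| = q * m)%N.
Proof.
move=> L_delta.
have limgE : limg (linfun L) = <<[seq delta_mx 0%R j | j <- enum (g @: setT)%SET]>>%VS.
  apply/eqP; rewrite eqEsubv; apply/andP; split.
    apply/subvP => _ /memv_imgP[c _ ->]; rewrite lfunE (matrix_sum_delta c) linear_sum.
    apply: memv_suml => k _; rewrite linear_sum; apply: memv_suml => f _.
    rewrite linearZ L_delta; apply/memvZ/memv_span/map_f.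
    by rewrite mem_enum imset_f.
  apply/span_subvP => _ /mapP[_ /[!mem_enum] /imsetP[[k f] _ ->] ->].
  by rewrite -L_delta -lfunE memv_img ?memvf.
have := limg_ker_dim (linfun L) fullv.
by rewrite capfv limgE dim_span_delta dimvf dim_matrix.
Qed.

End UnitMatrixMaps.

Section EdgeIdealCubics.
Variables (m : nat) (adj : rel 'I_m).
Hypotheses (adjC : ssrbool.symmetric adj) (adjI : irreflexive adj).

Definition edge_pairs : {set 'I_m * 'I_m} :=
  [set p : 'I_m * 'I_m | (p.1 < p.2) && adj p.1 p.2].
Local Notation q := #|edge_pairs|.
Definition edge_pair (k : 'I_q) : 'I_m * 'I_m := enum_val k.
Definition edge_set (k : 'I_q) : {set 'I_m} := [set (edge_pair k).1; (edge_pair k).2].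

Definition nbhd a : {set 'I_m} := [set x | adj a x].
Definition triples : {set {set 'I_m}} := [set S : {set 'I_m} | #|S| == 3].
Definition edges_in (S : {set 'I_m}) := #|[set k | edge_set k \subset S]|.
Definition centers (S : {set 'I_m}) := #|[set a in S | S :\ a \subset nbhd a]|.
Definition clique (S : {set 'I_m}) : bool :=
  [forall u in S, forall v in S, (u != v) ==> adj u v].

Lemma edge_pair_lt k : (edge_pair k).1 < (edge_pair k).2.
Proof. by have := enum_valP k; rewrite inE => /andP[]. Qed.

Lemma edge_pair_adj k : adj (edge_pair k).1 (edge_pair k).2.
Proof. by have := enum_valP k; rewrite inE => /andP[]. Qed.

Lemma edge_pair_neq k : (edge_pair k).1 != (edge_pair k).2.
Proof. by rewrite neq_ltn edge_pair_lt. Qed.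

Lemma card_edge_set k : #|edge_set k| = 2.
Proof. by rewrite cards2 edge_pair_neq. Qed.

Lemma edge_set_inj : injective edge_set.
Proof.
move=> k k' /setP eqkk'; apply: enum_val_inj; rewrite -/(edge_pair k) -/(edge_pair k').
have := edge_pair_lt k; have := edge_pair_lt k'; move: eqkk'; rewrite /edge_set.
case: (edge_pair k) => a b; case: (edge_pair k') => a' b' /= eqab ab' ab.
have := eqab a; have := eqab b; have := eqab a'; rewrite !inE !eqxx /= ?orbT.
move=> /orP[]/eqP ea' /esym/orP[]/eqP eb /esym/orP[]/eqP ea; subst=> //; lia.
Qed.

Lemma edges_in_sum S :
  edges_in S = \sum_(u in S) \sum_(v in S) ((u < v) && adj u v).
Proof.
rewrite /edges_in -(card_imset _ (@enum_val_inj _ (mem edge_pairs))).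
have -> : edge_pair @: [set k | edge_set k \subset S] =
          [set uv in setX S S | (uv.1 < uv.2) && adj uv.1 uv.2].
  apply/setP => uv; rewrite !inE; apply/imsetP/idP => [[k]|].
    rewrite inE subUset !sub1set => /andP[uS vS] ->.
    by rewrite uS vS edge_pair_lt edge_pair_adj.
  case/andP=> /andP[uS vS] uv_edge.
  have uv_in : uv \in edge_pairs by rewrite inE.
  exists (enum_rank_in uv_in uv); last by rewrite /edge_pair enum_rankK_in.
  by rewrite inE /edge_set /edge_pair enum_rankK_in // subUset !sub1set uS vS.
rewrite card_set_in_sum pair_big_dep /=.
by apply: eq_bigl => -[u v]; rewrite !inE.
Qed.

Lemma subD1_nbhd_all (s : seq 'I_m) a :
  ([set u | u \in s] :\ a \subset nbhd a) = all (fun u => (u != a) ==> adj a u) s.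
Proof.
apply/subsetP/allP => [sub u us|all_s u].
  by apply/implyP => ua; have := sub u; rewrite !inE ua us => /(_ isT).
by rewrite !inE => /andP[ua us]; have := all_s u us; rewrite ua.
Qed.

Lemma clique_all (s : seq 'I_m) :
  clique [set u | u \in s] = all (fun u => all (fun v => (u != v) ==> adj u v) s) s.
Proof.
apply/forall_inP/allP => [cl u us|all_s u]; last first.
  by rewrite inE => us; apply/forall_inP => v; rewrite inE; apply: (allP (all_s u us)).
by apply/allP => v vs; move/forall_inP: (cl u ltac:(by rewrite inE)); apply; rewrite inE.
Qed.

Lemma edges_in_clique_centers S : S \in triples ->
  edges_in S + clique S = centers S + (0 < edges_in S).
Proof.
rewrite inE; case: cards_eqP => s s_uniq; case: s s_uniq => [|x [|y [|z [|]]]] //= s_uniq _.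
rewrite /centers card_set_in_sum edges_in_sum clique_all.
under eq_bigr => u _ do rewrite big_set_seq //.
rewrite !big_set_seq // !big_cons !big_nil /= !subD1_nbhd_all /=.
move: s_uniq; rewrite !inE !negb_or => /and3P[/andP[xy xz] yz _].
rewrite ![adj y x]adjC ![adj z x]adjC ![adj z y]adjC !adjI !eqxx.
rewrite ![y == x]eq_sym ![z == x]eq_sym ![z == y]eq_sym.
rewrite (negbTE xy) (negbTE xz) (negbTE yz) /=.
have lt_xor (u v : 'I_m) : u != v -> (u < v) + (v < u) = 1.
  by rewrite neq_ltn; case: ltngtP.
have := lt_xor _ _ xy; have := lt_xor _ _ xz; have := lt_xor _ _ yz.
by case: (adj x y); case: (adj x z); case: (adj y z); rewrite /= ?andbT ?andbF; lia.
Qed.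

Lemma card_pairs_nbhd a :
  #|[set T : {set 'I_m} | T \subset nbhd a & #|T| == 2]| =
  #|[set S in triples | (a \in S) && (S :\ a \subset nbhd a)]|.
Proof.
have notin_nbhd (T : {set 'I_m}) : T \subset nbhd a -> a \notin T.
  by move/subsetP/(_ a) => sub; apply/negP => /sub; rewrite inE adjI.
rewrite -(@card_in_imset _ _ (fun T => a |: T)); last first.
  move=> T1 T2; rewrite !inE => /andP[T1a _] /andP[T2a _] eqT.
  by rewrite -(setU1K (notin_nbhd _ T1a)) eqT setU1K ?notin_nbhd.
apply: eq_card => S; apply/imsetP/idP => [[T]|].
  rewrite inE => /andP[Ta /eqP T2] ->.
  by rewrite !inE cardsU1 notin_nbhd // T2 setU1K ?notin_nbhd // eqxx Ta.
rewrite !inE => /andP[/eqP S3 /andP[aS Sa]]; exists (S :\ a); last by rewrite setD1K.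
rewrite inE Sa /=.
by have := cardsD1 a S; rewrite aS S3 add1n => -[<-].
Qed.

Lemma sum_binomial_nbhd : \sum_a 'C(#|nbhd a|, 2) = \sum_(S in triples) centers S.
Proof.
under eq_bigr => a _ do rewrite -cards_draws card_pairs_nbhd card_set_in_sum.
rewrite exchange_big /=; apply: eq_bigr => S _.
by rewrite /centers card_set_in_sum [RHS]big_mkcond; apply: eq_bigr => a _; case: (a \in S).
Qed.

(** [mon (k, f)] is the exponent of [x_f * g_k]; bounding its degree by 4 matches the
  coordinates of [syz_coords]. *)
Definition mon_mnm (p : 'I_q * 'I_m) : 'X_{1..m} :=
  (U_(p.2) + (U_((edge_pair p.1).1) + U_((edge_pair p.1).2)))%MM.

Lemma mdeg_mon_mnm p : mdeg (mon_mnm p) < 4.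
Proof. by rewrite !mdegD !mdeg1. Qed.

Definition mon p : 'X_{1..m < 4} := BMultinom (mdeg_mon_mnm p).

Lemma monP p p' : mon p = mon p' <-> mon p =1 mon p'.
Proof. by split=> [-> //|/mnmP eq_mon]; apply: val_inj. Qed.

Definition square_pairs : {set 'I_q * 'I_m} := [set p | p.2 \in edge_set p.1].
Definition mon_supp (p : 'I_q * 'I_m) : {set 'I_m} := p.2 |: edge_set p.1.

Lemma in_square_pairs p : (p \in square_pairs) = (p.2 \in edge_set p.1).
Proof. exact: in_set. Qed.

Lemma monE p i : mon p i = (p.2 == i) + (i \in edge_set p.1).
Proof.
rewrite /= !mnmDE !mnm1E !inE ![i == _]eq_sym.
case: (edge_pair p.1) (edge_pair_neq p.1) => a b /= ab.
by case: (a =P i) => [ai|]; case: (b =P i) => [bi|] //; rewrite ai bi eqxx in ab.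
Qed.

Lemma mon_sq p : p \in square_pairs -> mon p p.2 = 2.
Proof. by rewrite in_square_pairs monE eqxx => ->. Qed.

Lemma mon_sq_inj : {in square_pairs &, injective mon}.
Proof.
move=> [k f] [k' f'] sq sq' /monP eq_mon.
have eq_f : f = f'.
  move: (eq_mon f) sq; rewrite in_square_pairs !monE /= eqxx => eq_f1 fk.
  by move: eq_f1; rewrite fk; case: eqP => // _; case: (_ \in _).
congr pair => //; apply: edge_set_inj; apply/setP => i.
by have := eq_mon i; rewrite !monE /= eq_f => /addnI/(congr1 odd); rewrite !oddb.
Qed.

Lemma mon_sqfree p i : p \notin square_pairs -> mon p i = (i \in mon_supp p).
Proof.
rewrite in_square_pairs monE !inE => fE; rewrite [p.2 == i]eq_sym.
by case: eqP => [->|] //=; rewrite (negbTE fE).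
Qed.

Lemma card_mon : #|mon @: setT| = #|square_pairs| + #|mon_supp @: ~: square_pairs|.
Proof.
rewrite -(setUCr square_pairs) imsetU cardsU card_in_imset; last exact: mon_sq_inj.
have -> : (mon @: square_pairs) :&: (mon @: ~: square_pairs) = set0.
  apply/setP => M; rewrite !inE; apply/negP => /andP[/imsetP[p sq ->] /imsetP[p' sqf]].
  rewrite in_setC in sqf; move/monP/(_ p.2).
  by rewrite mon_sq // mon_sqfree //; case: (_ \in _).
rewrite cards0 subn0; congr addn; apply: card_imset_eq_kernel => p p'.
rewrite !in_setC => sqf sqf'; apply/eqP/eqP => [/monP eq_mon|eq_supp].
  apply/setP => i; have := eq_mon i.
  by rewrite !mon_sqfree // => /(congr1 odd); rewrite !oddb.
by apply/monP => i; rewrite !mon_sqfree // eq_supp.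
Qed.

Lemma mon_supp_fiber S p : S \in triples ->
  (p \notin square_pairs) && (mon_supp p == S) =
  (edge_set p.1 \subset S) && (p.2 \in S :\: edge_set p.1).
Proof.
rewrite inE => /eqP S3; apply/andP/andP => [[]|[ES]].
  by rewrite in_square_pairs => fE /eqP <-; rewrite subsetU1 in_setD fE setU11.
rewrite in_setD => /andP[fE fS]; split; first by rewrite in_square_pairs.
by rewrite eqEcard subUset sub1set fS ES cardsU1 fE card_edge_set S3.
Qed.

Lemma card_mon_supp_fiber S : S \in triples ->
  #|[set p in ~: square_pairs | mon_supp p == S]| = edges_in S.
Proof.
move=> S3; rewrite -sum1_card.
pose P k := edge_set k \subset S; pose Q k f := f \in S :\: edge_set k.
rewrite (eq_bigl (fun p => P p.1 && Q p.1 p.2)) => [|p]; last first.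
  by rewrite inE in_setC mon_supp_fiber.
rewrite -(pair_big_dep P Q (fun _ _ => 1)) /=.
rewrite /edges_in -sum1_card; apply: eq_big => [k|k ES]; first by rewrite inE.
rewrite sum1_card cardsD (setIidPr ES) card_edge_set.
by move: S3; rewrite inE => /eqP ->.
Qed.

Lemma mon_supp_triple p : p \notin square_pairs -> mon_supp p \in triples.
Proof.
by rewrite in_square_pairs => fE; rewrite inE /mon_supp cardsU1 fE card_edge_set.
Qed.

Lemma card_sqfree_pairs : #|~: square_pairs| = \sum_(S in triples) edges_in S.
Proof.
rewrite -sum1_card (partition_big mon_supp (mem triples)) => [|p]; last first.
  by rewrite inE; apply: mon_supp_triple.
apply: eq_bigr => S S3; rewrite -(card_mon_supp_fiber S3) sum1dep_card.
by apply: eq_card => p; rewrite !inE.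
Qed.

Lemma card_mon_supp :
  #|mon_supp @: ~: square_pairs| = \sum_(S in triples) (0 < edges_in S).
Proof.
rewrite -card_set_in_sum; apply: eq_card => S; rewrite inE.
apply/imsetP/andP => [[p /[!in_setC] sqf ->]|[S3]].
  have S3 := mon_supp_triple sqf; split=> //; rewrite -card_mon_supp_fiber //.
  by apply/card_gt0P; exists p; rewrite inE in_setC sqf /=.
rewrite -card_mon_supp_fiber // => /card_gt0P[p].
by rewrite inE => /andP[sqf /eqP <-]; exists p.
Qed.

Theorem card_mon_triangles :
  q * m + #|[set S in triples | clique S]| = #|mon @: setT| + \sum_a 'C(#|nbhd a|, 2).
Proof.
have card_pairs : #|square_pairs| + #|~: square_pairs| = q * m.
  by rewrite cardsC card_prod !card_ord.
rewrite card_mon card_mon_supp sum_binomial_nbhd card_set_in_sum -card_pairs.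
rewrite card_sqfree_pairs -!addnA -!big_split /=; congr addn.
by apply: eq_bigr => S S3; rewrite edges_in_clique_centers // addnC.
Qed.
End EdgeIdealCubics.

Section TreeLineGraph.
Variables (V : finType) (e : rel V).
Hypotheses (eC : ssrbool.symmetric e) (eI : irreflexive e).
Local Notation E := (graph_edges e).
Local Notation m := (nedges e).

Lemma line_adjC : ssrbool.symmetric (@line_adj V e).
Proof. by move=> i j; rewrite /line_adj eq_sym setIC. Qed.

Lemma line_adjI : irreflexive (@line_adj V e).
Proof. by move=> i; rewrite /line_adj eqxx. Qed.

Lemma graph_edgesP s : reflect (exists x y, e x y /\ s = [set x; y]) (s \in E).
Proof.
rewrite inE; apply: (iffP existsP) => [[x /existsP[y /andP[exy /eqP ->]]]|[x [y [exy ->]]]].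
  by exists x, y.
by exists x; apply/existsP; exists y; rewrite exy eqxx.
Qed.

Lemma graph_edge_eq s x y : s \in E -> x \in s -> y \in s -> x != y ->
  s = [set x; y] /\ e x y.
Proof.
case/graph_edgesP => a [b [eab ->]]; rewrite !inE.
by move=> /orP[]/eqP-> /orP[]/eqP->; rewrite ?eqxx // => _; rewrite setUC eC.
Qed.

Lemma in_edges_at x t : (t \in [set s in E | x \in s]) = (t \in E) && (x \in t).
Proof. exact: in_set. Qed.

Lemma card_edges_at x : #|[set s in E | x \in s]| = vdeg e x.
Proof.
rewrite /vdeg -(@card_in_imset _ _ (fun y => [set x; y])); last first.
  move=> y1 y2; rewrite !inE => exy1 _ /setP/(_ y1); rewrite !inE eqxx orbT.
  by move=> /esym/orP[/eqP y1x|/eqP //]; rewrite y1x eI in exy1.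
apply: eq_card => s; apply/idP/imsetP => [|[y]]; last first.
  rewrite inE => exy ->; rewrite inE set21 andbT.
  by apply/graph_edgesP; exists x, y.
rewrite inE => /andP[sE xs]; case/graph_edgesP: (sE) => a [b [eab eq_s]].
have [y [ys yx]] : exists y, y \in s /\ x != y.
  have ab : a != b by apply: contraTneq eab => ->; rewrite eI.
  case: (x =P a) => [xa|/eqP xa]; last by exists a; rewrite eq_s !inE eqxx.
  by exists b; rewrite eq_s !inE eqxx orbT xa.
have [-> exy] := graph_edge_eq sE xs ys yx.
by exists y; rewrite ?inE.
Qed.

Lemma edge_of_in (i : 'I_m) : edge_of i \in E.
Proof. exact: enum_valP. Qed.

Lemma edge_of_inj : injective (@edge_of V e).
Proof. exact: enum_val_inj. Qed.

Lemma edge_of_onto s : s \in E -> exists i : 'I_m, edge_of i = s.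
Proof. by move=> sE; exists (enum_rank_in sE s); rewrite /edge_of enum_rankK_in. Qed.

Lemma card_line_nbhd (i : 'I_m) :
  #|nbhd (@line_adj V e) i| = \sum_(x in edge_of i) vdeg e x - 2.
Proof.
set s := edge_of i; have sE : s \in E := edge_of_in i.
rewrite -(card_imset _ edge_of_inj).
have [x [y [exy eq_s]]] := graph_edgesP _ sE.
have xy : x != y by apply: contraTneq exy => ->; rewrite eI.
pose star_minus z := [set t in E | z \in t] :\ s.
have -> : @edge_of V e @: nbhd (@line_adj V e) i = star_minus x :|: star_minus y.
  apply/setP => t; rewrite in_setU !in_setD1 !in_edges_at -!andb_orr -setI2_neq0 -eq_s setIC.
  apply/imsetP/idP => [[j]|/and3P[ts tE st]].
    rewrite inE /line_adj => /andP[ij st] ->.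
    by rewrite st edge_of_in !andbT; apply: contra ij => /eqP/edge_of_inj ->.
  have [j ej] := edge_of_onto tE; exists j => //.
  by rewrite inE /line_adj ej st andbT; apply: contra ts => /eqP ij; rewrite -ej -ij.
have star_minusI : star_minus x :&: star_minus y = set0.
  apply/setP => t; rewrite in_setI !in_setD1 !in_edges_at in_set0.
  apply/negP => /andP[/and3P[ts tE xt] /and3P[_ _ yt]].
  by have [teq _] := graph_edge_eq tE xt yt xy; rewrite eq_s teq eqxx in ts.
have card_star_minus z : z \in s -> #|star_minus z| = (vdeg e z).-1.
  by move=> zs; rewrite -card_edges_at [in RHS](cardsD1 s) in_edges_at sE zs.
rewrite cardsU star_minusI cards0 subn0 !card_star_minus ?eq_s ?inE ?eqxx ?orbT //.
rewrite big_setU1 ?inE //= big_set1.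
have deg_x : 0 < vdeg e x by apply/card_gt0P; exists y; rewrite inE.
have deg_y : 0 < vdeg e y by apply/card_gt0P; exists x; rewrite inE eC.
lia.
Qed.

Lemma sum_binomial_line_nbhd :
  \sum_i 'C(#|nbhd (@line_adj V e) i|, 2) =
  \sum_(s in E) 'C(\sum_(x in s) vdeg e x - 2, 2).
Proof.
rewrite (big_enum_val (fun s : {set V} => 'C(\sum_(x in s) vdeg e x - 2, 2))).
by apply: eq_bigr => i _; rewrite card_line_nbhd.
Qed.

Definition star v : {set 'I_m} := [set j | v \in edge_of j].

Lemma card_star v : #|star v| = vdeg e v.
Proof.
rewrite -card_edges_at -(card_imset _ edge_of_inj); apply: eq_card => t.
apply/imsetP/idP => [[j]|]; first by rewrite inE => vj ->; rewrite in_edges_at vj edge_of_in.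
rewrite in_edges_at => /andP[tE vt]; have [j ej] := edge_of_onto tE.
by exists j; rewrite ?inE ej.
Qed.

Lemma subset_stars_eq (S : {set 'I_m}) v w :
  1 < #|S| -> S \subset star v -> S \subset star w -> v = w.
Proof.
case/card_gt1P => i [j [iS jS ij]] /subsetP Sv /subsetP Sw; apply/eqP/negP => /negP vw.
have := Sv i iS; have := Sw i iS; have := Sv j jS; have := Sw j jS.
rewrite !inE => wj vj wi vi.
have [ei _] := graph_edge_eq (edge_of_in i) vi wi vw.
have [ej _] := graph_edge_eq (edge_of_in j) vj wj vw.
by move: ij; rewrite (edge_of_inj (etrans ei (esym ej))) eqxx.
Qed.

Lemma clique_subset_star (S : {set 'I_m}) v : S \subset star v -> clique (@line_adj V e) S.
Proof.
move/subsetP => Sv; apply/forall_inP => i iS; apply/forall_inP => j jS.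
apply/implyP => ij; rewrite /line_adj ij; apply/set0Pn; exists v.
by have := Sv i iS; have := Sv j jS; rewrite !inE => -> ->.
Qed.

Hypothesis acyc : graph_acyclic e.

Lemma acyclic_no_triangle x y z : e x y -> e y z -> e z x -> False.
Proof.
move=> exy eyz ezx; have neq u w : e u w -> u != w by apply: contraTneq => ->; rewrite eI.
have := acyc (p := [:: x; y; z]); rewrite /= !inE !negb_or.
by rewrite neq // eq_sym neq // neq // exy eyz ezx => /(_ isT isT).
Qed.

Lemma clique3_subset_star (S : {set 'I_m}) :
  #|S| = 3 -> clique (@line_adj V e) S -> exists v, S \subset star v.
Proof.
case: cards_eqP => s s_uniq; case: s s_uniq => [|i [|j [|k [|]]]] //= s_uniq _.
move: s_uniq; rewrite !inE !negb_or => /and3P[/andP[ij ik] jk _] /forall_inP cl.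
have meet u w : u \in [:: i; j; k] -> w \in [:: i; j; k] -> u != w ->
    exists2 x, x \in edge_of u & x \in edge_of w.
  move=> us ws uw; have /forall_inP := cl u ltac:(by rewrite inE).
  move/(_ w ltac:(by rewrite inE)); rewrite uw /line_adj uw => /set0Pn[x].
  by rewrite inE => /andP[]; exists x.
have [x xi xj] := meet i j (mem_head _ _) ltac:(by rewrite !inE eqxx orbT) ij.
case xk : (x \in edge_of k).
  by exists x; apply/subsetP => u; rewrite !inE => /or3P[]/eqP->; rewrite ?inE.
have [y yi yk] := meet i k (mem_head _ _) ltac:(by rewrite !inE eqxx !orbT) ik.
have [z zj zk] :=
  meet j k ltac:(by rewrite !inE eqxx orbT) ltac:(by rewrite !inE eqxx !orbT) jk.
have xy : x != y by apply: contraFneq xk => ->.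
have xz : x != z by apply: contraFneq xk => ->.
have [ei exy] := graph_edge_eq (edge_of_in i) xi yi xy.
have yz : y != z.
  apply: contra_neq ij => eyz; rewrite -eyz in zj.
  have [ej _] := graph_edge_eq (edge_of_in j) xj zj xy.
  by apply: edge_of_inj; rewrite ei ej.
have [_ eyz] := graph_edge_eq (edge_of_in k) yk zk yz.
have [_ exz] := graph_edge_eq (edge_of_in j) xj zj xz.
by case: (acyclic_no_triangle exy eyz); rewrite eC.
Qed.

Lemma card_stars_containing (S : {set 'I_m}) :
  #|S| = 3 -> #|[set v | S \subset star v]| = clique (@line_adj V e) S.
Proof.
move=> S3; case clS: (clique _ S).
  have [v Sv] := clique3_subset_star S3 clS; apply/eqP/cards1P; exists v.
  apply/setP => w; rewrite !inE; apply/idP/eqP => [Sw|->//].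
  by apply: subset_stars_eq Sw Sv; rewrite S3.
apply/eqP; rewrite cards_eq0; apply/eqP/setP => v; rewrite !inE.
by apply: contraFF clS; apply: clique_subset_star.
Qed.

Lemma card_line_triangles :
  #|[set S in triples m | clique (@line_adj V e) S]| = \sum_v 'C(vdeg e v, 3).
Proof.
under [RHS]eq_bigr => v _ do rewrite -card_star -cards_draws card_set_sum.
rewrite exchange_big card_set_in_sum big_mkcond /=; apply: eq_bigr => S _.
case: ifPn => [/[!inE]/eqP S3|]; last first.
  by rewrite inE => /negbTE S3; rewrite big1 // => v _; rewrite S3 andbF.
by rewrite -card_stars_containing // card_set_sum; apply: eq_bigr => v _; rewrite S3 eqxx andbT.
Qed.
End TreeLineGraph.

Section SyzygyCoordinates.
Import GRing.Theory.
Local Open Scope ring_scope.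
Variables (V : finType) (e : rel V) (K : fieldType).
Local Notation m := (nedges e).
Local Notation q := #|edge_pairs (@line_adj V e)|.
Local Notation mon := (@mon m (@line_adj V e)).

Lemma syz_image_delta k f :
  syz_image (delta_mx k f : 'M[K]_(q, m)) = 'X_[@mon_mnm m (@line_adj V e) (k, f)].
Proof.
rewrite /syz_image (bigD1 k) //= [X in _ + X]big1 ?addr0 => [|k' k'k]; last first.
  by rewrite big1 ?mul0r // => f' _; rewrite mxE (negbTE k'k) scale0r.
rewrite (bigD1 f) //= [X in _ + X]big1 ?addr0 => [|f' f'f]; last first.
  by rewrite mxE eqxx (negbTE f'f) scale0r.
by rewrite mxE !eqxx scale1r /gen_mon -!mpolyXD.
Qed.

Lemma syz_coords_linear : linear (@syz_coords V e K).
Proof.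
move=> a c d; apply/rowP => j; rewrite !mxE -mcoeffZ -mcoeffD; congr mcoeff.
rewrite /syz_image scaler_sumr -big_split; apply: eq_bigr => k _ /=.
rewrite scalerAl -mulrDl scaler_sumr -big_split; congr (_ * _).
by apply: eq_bigr => f _; rewrite !mxE scalerDl scalerA.
Qed.

HB.instance Definition _ :=
  GRing.isLinear.Build K _ _ _ (@syz_coords V e K) syz_coords_linear.

Lemma syz_coords_delta k f :
  syz_coords (delta_mx k f : 'M[K]_(q, m)) = delta_mx 0 (enum_rank (mon (k, f))).
Proof.
apply/rowP => j; rewrite !mxE syz_image_delta mcoeffX eqxx /=.
suff -> : (mon_mnm (k, f) == enum_val j) = (j == enum_rank (mon (k, f))) by [].
apply/eqP/eqP => [mon_j|->]; last by rewrite enum_rankK.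
by rewrite -[j]enum_valK; congr enum_rank; apply: val_inj.
Qed.

Lemma beta23_line_card_mon : (beta23_line e K + #|mon @: setT| = q * m)%N.
Proof.
rewrite -(card_imset _ enum_rank_inj) -imset_comp.
exact: dim_lker_unit_map syz_coords_delta.
Qed.
End SyzygyCoordinates.

Theorem proposition2p17 (K : fieldType) (V : finType) (e : rel V) :
  is_tree e ->
  ((@beta23_line V e K)%:Z =
     (\sum_(s in graph_edges e) 'C(\sum_(x in s) vdeg e x - 2, 2))%:Z
     - (\sum_(x : V) 'C(vdeg e x, 3))%:Z)%R.
Proof.
move=> [[eC eI] [_ [_ acyc]]].
have count := card_mon_triangles (@line_adjC V e) (@line_adjI V e).
rewrite card_line_triangles // sum_binomial_line_nbhd // in count.
have beta := beta23_line_card_mon e K.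
have <- : beta23_line e K + \sum_x 'C(vdeg e x, 3) =
          \sum_(s in graph_edges e) 'C(\sum_(x in s) vdeg e x - 2, 2) by lia.
by rewrite PoszD GRing.addrK.
Qed.
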